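(* Assume $Q$ is connected. Each of the following conditions implies $L_{-1}=0$: (i) $Q$ has no loop; (ii) for every loop $a$ of $Q$ (arrow with $s(a)=t(a)$), the characteristic of $k$ does not divide the integer $m\ge2$ such that $a^m\in Z$ and $a^{m-1}\in B$; (iii) $k$ has characteristic $0$; (iv) $Z=Q_m$ for some $m\ge2$ (so $\Lambda=kQ/\langle Q_m\rangle$ is a truncated quiver algebra) and $Q$ is not the quiver with one vertex and one loop; (v) $Q$ is the quiver with one vertex and one loop, $Z=Q_m$ and the characteristic of $k$ does not divide $m\ge2$.
   Context: Let $k$ be an algebraically closed field and $Q$ a finite quiver; $Q_n$ is the set of paths of length $n$ ($Q_0$ vertices, $Q_1$ arrows), $s,t$ source and terminus. Let $Z$ be a minimal set of paths of length $\ge2$ (no proper subpath of an element of $Z$ lies in $Z$) with $\Lambda=kQ/\langle Z\rangle$ finite dimensional. $B$ is the set of paths (vertices included) not containing an element of $Z$ as a subpath. Paths are parallel if they have the same source and terminus; $Q_1//Q_0$ is the set of pairs $(a,e)$ with $a$ a loop at the vertex $e$, and $k(X//Y)$ is the vector space with basis the pairs of parallel paths in $X\times Y$. For a path $\varepsilon$ and a pair $(a,\gamma)$ of parallel paths with $a\in Q_1$, $\gamma\in B$, $\varepsilon^{(a,\gamma)}$ is the sum of all paths in $B$ obtained by replacing one occurrence of $a$ in $\varepsilon$ by $\gamma$ ($0$ if none), and $(\eta,\varepsilon^{(a,\gamma)})=\sum_i(\eta,\varepsilon_i)$ if $\varepsilon^{(a,\gamma)}=\sum_i\varepsilon_i$.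 $\psi_1:k(Q_1//B)\to k(Z//B)$ is $(a,\gamma)\mapsto\sum_{p\in Z}(p,p^{(a,\gamma)})$, and $L_{-1}:=k(Q_1//Q_0)\cap\operatorname{Ker}\psi_1$ (the degree $-1$ component of $\operatorname{H}^1(\Lambda,\Lambda)$). *)

From mathcomp Require Import all_boot all_order all_algebra.
Set Implicit Arguments. Unset Strict Implicit. Unset Printing Implicit Defensive.
Import GRing.Theory.


Record quiver := Quiver {
  qV : finType;
  qA : finType;
  src : qA -> qV;
  tgt : qA -> qV }.

(* Raw path data: (starting vertex, list of arrows a1 ... an, traversed in
   this order, so s(a1) = start and t(ai) = s(a(i+1))).  The trivial path at
   vertex e is (e, [::]). *)
Definition rawpath (Q : quiver) := (qV Q * seq (qA Q))%type.

Definition is_path (Q : quiver) (p : rawpath Q) : bool :=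
  match p.2 with
  | [::] => true
  | a :: l => (src a == p.1) && path (fun x y => tgt x == src y) a l
  end.

Definition source (Q : quiver) (p : rawpath Q) : qV Q := p.1.
Definition terminus (Q : quiver) (p : rawpath Q) : qV Q :=
  last p.1 [seq tgt a | a <- p.2].

Definition parallel (Q : quiver) (p q : rawpath Q) : bool :=
  (source p == source q) && (terminus p == terminus q).

Definition is_loop (Q : quiver) (a : qA Q) : bool := src a == tgt a.

Definition path_vertices (Q : quiver) (p : rawpath Q) : seq (qV Q) :=
  p.1 :: [seq tgt a | a <- p.2].

Definition subpath (Q : quiver) (z p : rawpath Q) : bool :=
  is_path z &&
  (if z.2 is [::] then z.1 \in path_vertices p else infix z.2 p.2).

Definition minimal_relations (Q : quiver) (Z : pred (rawpath Q)) : Prop :=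
  forall p, Z p ->
    [/\ is_path p, 2 <= size p.2 &
        forall z, subpath z p -> z != p -> ~~ Z z].

Definition inB (Q : quiver) (Z : pred (rawpath Q)) (p : rawpath Q) : Prop :=
  is_path p /\ forall z, Z z -> ~~ subpath z p.

(* Lambda = kQ/<Z> finite dimensional: B is finite. *)
Definition finite_B (Q : quiver) (Z : pred (rawpath Q)) : Prop :=
  exists s : seq (rawpath Q), forall p, inB Z p -> p \in s.

Definition connected_quiver (Q : quiver) : Prop :=
  forall u v : qV Q,
    connect (fun x y => [exists a : qA Q,
               ((src a == x) && (tgt a == y)) || ((src a == y) && (tgt a == x))])
            u v.

Definition replace_at (Q : quiver) (p : rawpath Q) (i : nat) (gamma : rawpath Q)
  : rawpath Q :=
  (p.1, take i p.2 ++ gamma.2 ++ drop i.+1 p.2).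

(* Coefficient of the path q in eps^(a,gamma): the number of occurrences of a
   in eps whose replacement by gamma yields q.  (Used only for q in B, so this
   is the coordinate of eps^(a,gamma) on the basis vector q.) *)
Definition occ_coef (Q : quiver) (eps : rawpath Q) (a : qA Q)
  (gamma : rawpath Q) (q : rawpath Q) : nat :=
  count (fun i => (nth a eps.2 i == a) && (replace_at eps i gamma == q))
        (iota 0 (size eps.2)).

(* An element of k(Q1//Q0) is given by its coefficients lam a on the basis
   vectors (a, s(a)) for loops a (lam vanishes off loops).  It lies in
   L_{-1} iff psi_1 of it vanishes, i.e. all its coordinates on the basis
   vectors (p, q) of k(Z//B) (p in Z, q in B, parallel) vanish. *)
Definition in_L_minus1 (k : fieldType) (Q : quiver) (Z : pred (rawpath Q))
  (lam : qA Q -> k) : Prop :=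
  (forall a, ~~ is_loop a -> lam a = 0%R) /\
  (forall p q : rawpath Q, Z p -> inB Z q -> parallel p q ->
     (\sum_(a : qA Q | is_loop a) lam a * (occ_coef p a (src a, [::]) q)%:R = 0)%R).

Definition Z_is_Qm (Q : quiver) (Z : pred (rawpath Q)) (m : nat) : Prop :=
  forall p, Z p = is_path p && (size p.2 == m).

Definition one_loop_quiver (Q : quiver) : Prop :=
  #|qV Q| = 1%N /\ #|qA Q| = 1%N.

(* Fix a loop a.  If p = u a^n w lies in Z, a occurs neither in u nor in w, and
   q = u a^(n-1) w lies in B, then the (p, q)-coordinate of psi_1(lam) is
   lam_a * n: there are n ways to delete an a from p, and deleting any other
   loop changes its own number of occurrences.  Since B is finite, some power
   of a is not in B; the relation it contains is a power a^m by minimality,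
   and minimality again puts a^(m-1) in B.  This gives lam_a * m = 0, which
   settles (ii), (iii) and (v).  For Z = Q_m, connectedness provides another
   arrow b at the vertex of a unless Q is a single loop, and a^(m-1) b or
   b a^(m-1) yields lam_a * (m-1) = 0 as well. *)

From mathcomp Require Import all_boot all_order all_algebra zify.
From Stdlib Require Import Classical.
Set Implicit Arguments. Unset Strict Implicit.
Import GRing.Theory.

Lemma count_delete_nth (T : Type) (x0 : T) (P : pred T) (s : seq T) i : i < size s ->
  count P s = P (nth x0 s i) + count P (take i s ++ drop i.+1 s).
Proof.
move=> lt_i_s; rewrite -[in LHS](cat_take_drop i s) (drop_nth x0 lt_i_s).
by rewrite !count_cat /= addnCA.
Qed.

Lemma count_nth_iota (T : Type) (x0 : T) (P : pred T) (s : seq T) :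
  count (fun i => P (nth x0 s i)) (iota 0 (size s)) = count P s.
Proof. by rewrite -[in RHS](mkseq_nth x0 s) count_map. Qed.

Lemma delete_in_block (T : eqType) (x : T) (u w : seq T) n i :
  x \notin u -> x \notin w -> i < size (u ++ nseq n x ++ w) ->
  nth x (u ++ nseq n x ++ w) i = x ->
  take i (u ++ nseq n x ++ w) ++ drop i.+1 (u ++ nseq n x ++ w) = u ++ nseq n.-1 x ++ w.
Proof.
rewrite !size_cat size_nseq => xu xw lt_i_s nth_x.
have le_u_i : size u <= i.
  by rewrite leqNgt; apply: contra xu => lt_i_u; rewrite -nth_x nth_cat lt_i_u mem_nth.
have lt_i_un : i < size u + n.
  rewrite ltnNge; apply: contra xw => le_un_i; rewrite -nth_x nth_cat ltnNge le_u_i /=.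
  by rewrite nth_cat size_nseq ltnNge leq_subRL // le_un_i mem_nth //; lia.
set j := i - size u; set k := n - j.+1.
have split_nseq : nseq n x = nseq j x ++ x :: nseq k x.
  by rewrite -[x :: _]/(nseq 1 x ++ _) -!nseqD; congr nseq; lia.
have -> : i = size (u ++ nseq j x) by rewrite size_cat size_nseq; lia.
have -> : u ++ nseq n x ++ w = (u ++ nseq j x) ++ x :: nseq k x ++ w.
  by rewrite split_nseq -!catA.
rewrite take_size_cat // -addn1 addnC -drop_drop drop_size_cat //= drop0.
by rewrite -catA [nseq j x ++ _]catA -nseqD; congr (_ ++ nseq _ _ ++ _); lia.
Qed.

Section OccCoef.
Variable Q : quiver.
Implicit Types (p q : rawpath Q) (a c : qA Q).

Lemma occ_coef_eq0 p q c x :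
  (count_mem c q.2).+1 != count_mem c p.2 -> occ_coef p c (x, [::]) q = 0.
Proof.
move=> count_neq; apply/eqP; rewrite -leqn0 leqNgt -has_count.
apply/hasPn => i; rewrite mem_iota add0n => /andP[_ lt_i_p].
apply/negP => /andP[/eqP nth_c /eqP q_del]; move: count_neq.
by rewrite -q_del (count_delete_nth c _ lt_i_p) nth_c /= eqxx add1n eqxx.
Qed.

Lemma occ_coef_block v (u w : seq (qA Q)) a n x :
  a \notin u -> a \notin w ->
  occ_coef (v, u ++ nseq n a ++ w) a (x, [::]) (v, u ++ nseq n.-1 a ++ w) = n.
Proof.
move=> au aw; rewrite /occ_coef /=.
transitivity (count (fun i => nth a (u ++ nseq n a ++ w) i == a)
                    (iota 0 (size (u ++ nseq n a ++ w)))).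
  apply: eq_in_count => i; rewrite mem_iota add0n => /andP[_ lt_i_s].
  case: eqP => //= /(delete_in_block au aw lt_i_s) del.
  by rewrite /replace_at /= del eqxx.
rewrite (count_nth_iota _ (pred1 a)) !count_cat count_nseq /= eqxx.
by rewrite (count_memPn au) (count_memPn aw) mul1n addn0.
Qed.

End OccCoef.

Lemma infix_nseq (T : eqType) (t : seq T) (x : T) n : infix t (nseq n x) ->
  t = nseq (size t) x /\ size t <= n.
Proof.
move=> tx; split; last by rewrite -(size_nseq n x) size_infix.
apply/all_pred1P/allP => y /(mem_infix tx).
by rewrite mem_nseq => /andP[].
Qed.

Lemma last_nseq_self (T : Type) (x : T) n : last x (nseq n x) = x.
Proof. by elim: n. Qed.

Section LoopPaths.
Variables (Q : quiver) (a : qA Q).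
Hypothesis loop_a : is_loop a.

Lemma path_nseq_loop (x : qA Q) n :
  path (fun x y => tgt x == src y) x (nseq n a) = (n == 0) || (tgt x == src a).
Proof.
by elim: n x => [|n IHn] x //=; rewrite IHn (eqP loop_a) eqxx orbT andbT.
Qed.

Lemma is_path_loop_power n : is_path (src a, nseq n a).
Proof.
by case: n => //= n; rewrite /is_path /= eqxx path_nseq_loop (eqP loop_a) eqxx orbT.
Qed.

Lemma is_path_loop_power_rcons (b : qA Q) n : src b = src a ->
  is_path (src a, nseq n a ++ [:: b]).
Proof.
move=> src_b; case: n => [|n]; rewrite /is_path /= ?src_b ?eqxx //.
by rewrite cat_path path_nseq_loop last_nseq_self /= src_b -(eqP loop_a) eqxx orbT.
Qed.

Lemma is_path_cons_loop_power (b : qA Q) n : tgt b = src a ->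
  is_path (src b, b :: nseq n a).
Proof. by move=> tgt_b; rewrite /is_path /= eqxx path_nseq_loop tgt_b eqxx orbT. Qed.

Lemma terminus_loop_power n : terminus (src a, nseq n a) = src a.
Proof. by rewrite /terminus /= map_nseq -(eqP loop_a) last_nseq_self. Qed.

Lemma subpath_loop_power (z : rawpath Q) v n : z.2 != [::] ->
  subpath z (v, nseq n a) -> z = (src a, nseq (size z.2) a) /\ size z.2 <= n.
Proof.
case: z => x [//|c l] _; rewrite /subpath /= => /andP[path_z /infix_nseq[cl_E le_n]].
split=> //; case: cl_E => c_a l_E; move: path_z; rewrite /is_path /= c_a.
by case/andP=> /eqP <- _; rewrite -l_E.
Qed.

Lemma subpath_loop_powers i j : 0 < i <= j ->
  subpath (src a, nseq i a) (src a, nseq j a).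
Proof.
case/andP=> lt0i le_ij; rewrite /subpath is_path_loop_power.
case: i lt0i le_ij => //= i _ le_ij.
by rewrite (_ : j = i.+1 + (j - i.+1)) ?nseqD ?prefix_infix //; lia.
Qed.

End LoopPaths.

Section Relations.
Variables (Q : quiver) (Z : pred (rawpath Q)).

Lemma loop_power_notin_B (a : qA Q) : finite_B Z -> is_loop a ->
  exists n, ~ inB Z (src a, nseq n a).
Proof.
move=> [s s_B] loop_a; apply: not_all_ex_not => all_B.
have : (size s).+1 <= size s.
  rewrite -[X in X <= _](size_iota 0) -(size_map (fun n => (src a, nseq n a))).
  apply: uniq_leq_size => [|_ /mapP[n _ ->]]; last exact: s_B.
  rewrite map_inj_uniq ?iota_uniq // => m n [].
  by move/(congr1 size); rewrite !size_nseq.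
by rewrite ltnn.
Qed.

Lemma loop_power_relation (a : qA Q) : minimal_relations Z -> finite_B Z -> is_loop a ->
  exists m, [/\ 2 <= m, Z (src a, nseq m a) & inB Z (src a, nseq m.-1 a)].
Proof.
move=> minZ finZ loop_a; have [n notB] := loop_power_notin_B finZ loop_a.
have [z Zz sub_z] : exists2 z, Z z & subpath z (src a, nseq n a).
  apply: NNPP => no_z; apply: notB; split; first exact: is_path_loop_power.
  by move=> z Zz; apply/negP => sub_z; apply: no_z; exists z.
have [_ z_ge2 z_min] := minZ z Zz.
have z_ne0 : z.2 != [::] by case: z.2 z_ge2.
have [zE _] := subpath_loop_power z_ne0 sub_z.
exists (size z.2); split; rewrite -?zE //.
split; first exact: is_path_loop_power.
move=> y Zy; apply/negP => sub_y.
have [_ y_ge2 _] := minZ y Zy.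
have y_ne0 : y.2 != [::] by case: y.2 y_ge2.
have [yE y_le] := subpath_loop_power y_ne0 sub_y.
suff: ~~ Z y by rewrite Zy.
apply: z_min.
  by rewrite zE yE subpath_loop_powers //; lia.
by rewrite zE yE; apply/eqP => -[/(congr1 size)]; rewrite !size_nseq; lia.
Qed.

End Relations.

Lemma inB_short (Q : quiver) (Z : pred (rawpath Q)) m (q : rawpath Q) :
  Z_is_Qm Z m -> 0 < m -> is_path q -> size q.2 < m -> inB Z q.
Proof.
move=> Qm m_gt0 path_q q_lt; split=> // -[x [|c l]]; rewrite Qm => /andP[_ /eqP size_z].
  by rewrite -size_z in m_gt0.
by apply/negP => /andP[_ /size_infix]; rewrite size_z leqNgt q_lt.
Qed.

Section Connected.
Variables (Q : quiver) (a : qA Q).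
Hypotheses (conn : connected_quiver Q) (loop_a : is_loop a).

Lemma only_arrow_one_loop :
  (forall b, (src b == src a) || (tgt b == src a) -> b = a) -> one_loop_quiver Q.
Proof.
move=> only_a.
have src_tgt b : (src b == src a) = (tgt b == src a).
  apply/idP/idP => [src_b|tgt_b]; rewrite (only_a b) ?src_b ?tgt_b ?orbT //.
  by rewrite -(eqP loop_a).
have closed_a : closed (fun x y => [exists b, ((src b == x) && (tgt b == y))
                           || ((src b == y) && (tgt b == x))]) (pred1 (src a)).
  by move=> x y /existsP[b /orP[]/andP[/eqP <- /eqP <-]]; rewrite !inE src_tgt.
have all_v v : v = src a.
  by have := closed_connect closed_a (conn (src a) v); rewrite !inE eqxx => /esym/eqP.
split; apply/eqP/card1P; first by exists (src a) => v; rewrite !inE [v]all_v eqxx.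
exists a => b; rewrite !inE; apply/idP/eqP => // _.
by apply: only_a; rewrite [src b]all_v eqxx.
Qed.

Lemma exists_other_arrow : ~ one_loop_quiver Q ->
  exists2 b, b != a & (src b == src a) || (tgt b == src a).
Proof.
move=> not_one; apply: NNPP => no_b; apply/not_one/only_arrow_one_loop => b inc_b.
by case: (eqVneq b a) => // b_a; case: no_b; exists b.
Qed.

End Connected.

Local Open Scope ring_scope.

Lemma lam_mul_block_eq0 (k : fieldType) (Q : quiver) (Z : pred (rawpath Q))
    (lam : qA Q -> k) (a : qA Q) v (u w : seq (qA Q)) n :
  in_L_minus1 Z lam -> is_loop a -> a \notin u -> a \notin w ->
  Z (v, u ++ nseq n a ++ w) -> inB Z (v, u ++ nseq n.-1 a ++ w) ->
  parallel (v, u ++ nseq n a ++ w) (v, u ++ nseq n.-1 a ++ w) ->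
  lam a * n%:R = 0.
Proof.
move=> [_ lamZ] loop_a au aw Zp Bq par; have := lamZ _ _ Zp Bq par.
(* Deleting a loop c != a cannot turn p into q: q has as many c's as p. *)
rewrite (bigD1 a) //= occ_coef_block // big1 ?addr0 // => c /andP[_ c_a].
have a_notc : pred1 c a = false by rewrite /= eq_sym (negbTE c_a).
by rewrite occ_coef_eq0 ?mulr0 //= !count_cat !count_nseq a_notc; lia.
Qed.

Lemma lam_mul_pred_eq0 (k : fieldType) (Q : quiver) (Z : pred (rawpath Q))
    (lam : qA Q -> k) (a : qA Q) m :
  connected_quiver Q -> ~ one_loop_quiver Q -> Z_is_Qm Z m -> (1 < m)%N ->
  in_L_minus1 Z lam -> is_loop a -> lam a * m.-1%:R = 0.
Proof.
move=> conn not_one Qm m_gt1 lamL loop_a.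
have [b b_a inc_b] := exists_other_arrow conn loop_a not_one.
have a_notb : a \notin [:: b] by rewrite inE eq_sym.
have m_gt0 : (0 < m)%N by apply: ltnW.
case/orP: inc_b => /eqP inc_b.
- have path_ab n := is_path_loop_power_rcons loop_a n inc_b.
  apply: (lam_mul_block_eq0 (v := src a) (u := [::]) (w := [:: b]) lamL) => //=.
  + by rewrite Qm path_ab size_cat size_nseq addn1 prednK ?eqxx.
  + by apply: inB_short Qm m_gt0 (path_ab _) _; rewrite size_cat size_nseq /=; lia.
  + by rewrite /parallel /terminus /= !map_cat !last_cat /= !eqxx.
- have path_ba n := is_path_cons_loop_power loop_a n inc_b.
  have term_ba n : terminus (src b, b :: nseq n a) = src a.
    rewrite /terminus /= inc_b -[last _ _]/(terminus (src a, nseq n a)).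
    exact: terminus_loop_power.
  apply: (lam_mul_block_eq0 (v := src b) (u := [:: b]) (w := [::]) lamL) => //=; rewrite !cats0.
  + by rewrite Qm path_ba /= size_nseq prednK.
  + by apply: inB_short Qm m_gt0 (path_ba _) _; rewrite /= size_nseq; lia.
  + by rewrite /parallel !term_ba !eqxx.
Qed.

Lemma natf_neq0_pchar_ndvd (k : fieldType) m : (0 < m)%N ->
  (forall p, p \in [pchar k] -> ~~ (p %| m)%N) -> m%:R != 0 :> k.
Proof.
move=> m_gt0 ndvd; apply/negP => m_eq0; have [p char_p] := natf0_pchar m_gt0 m_eq0.
by move: (ndvd p char_p); rewrite (dvdn_pcharf char_p) m_eq0.
Qed.

Theorem proposition3p2 (k : closedFieldType) (Q : quiver) (Z : pred (rawpath Q)) :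
  connected_quiver Q ->
  minimal_relations Z ->
  finite_B Z ->
  ( (* (i) *) (forall a : qA Q, ~~ is_loop a)
    \/ (* (ii) *)
    (forall a : qA Q, is_loop a -> forall m : nat, (2 <= m)%N ->
       Z (src a, nseq m a) -> inB Z (src a, nseq m.-1 a) ->
       forall p : nat, p \in [pchar k] -> ~~ (p %| m)%N)
    \/ (* (iii) *) [pchar k] =i pred0
    \/ (* (iv) *)
    (exists m : nat, (2 <= m)%N /\ Z_is_Qm Z m /\ ~ one_loop_quiver Q)
    \/ (* (v) *)
    (one_loop_quiver Q /\
     exists m : nat, [/\ (2 <= m)%N, Z_is_Qm Z m &
                        forall p : nat, p \in [pchar k] -> ~~ (p %| m)%N]) ) ->
  forall lam : qA Q -> k, in_L_minus1 Z lam -> forall a : qA Q, lam a = 0.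
Proof.
move=> conn minZ finZ cases lam lamL a.
have [lam_nonloop _] := lamL.
have [loop_a | /lam_nonloop //] := boolP (is_loop a).
have [m [m_ge2 Zm Bm]] := loop_power_relation minZ finZ loop_a.
have lam_m : lam a * m%:R = 0.
  apply: (lam_mul_block_eq0 (v := src a) (u := [::]) (w := [::]) lamL) => //=;
    rewrite !cats0 //.
  by rewrite /parallel !(terminus_loop_power loop_a) /= ?eqxx.
have lam_eq0 : (forall p, p \in [pchar k] -> ~~ (p %| m)%N) -> lam a = 0.
  move=> ndvd; have /negbTE m_neq0 := natf_neq0_pchar_ndvd (ltnW m_ge2) ndvd.
  by apply/eqP; move/eqP: lam_m; rewrite mulf_eq0 m_neq0 orbF.
have Qm_eq m' : Z_is_Qm Z m' -> m' = m.
  by move=> Qm; move: Zm; rewrite Qm size_nseq => /andP[_ /eqP].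
case: cases => [no_loop|[char_m|[char0|[[m' [_ [Qm not_one]]]|[_ [m' [_ Qm char_m]]]]]]].
- by have := no_loop a; rewrite loop_a.
- exact: lam_eq0 (char_m a loop_a m m_ge2 Zm Bm).
- by apply: lam_eq0 => p; rewrite char0.
- have Qm_m : Z_is_Qm Z m by rewrite -(Qm_eq _ Qm).
  have lam_pred := lam_mul_pred_eq0 conn not_one Qm_m m_ge2 lamL loop_a.
  have one_eq : 1 = m%:R - m.-1%:R :> k.
    by rewrite -natrB ?leq_pred // (_ : m - m.-1 = 1)%N //; lia.
  by rewrite -[lam a]mulr1 one_eq mulrBr lam_m lam_pred subr0.
- by apply: lam_eq0; rewrite -(Qm_eq _ Qm).
Qed.
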